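(* For all integers $n\ge2$ and $k\ge1$: (a) the eccentricity of the root $\mathbf r=00\ldots0$ in $H_{n,k}$ equals $k$, and the radius of $H_{n,k}$ equals $k$; (b) the diameter of $H_{n,k}$ equals $2k-1$.
   Context: Let $n\ge 2$ and $k\ge 1$ be integers. $H_{n,k}$ is the simple undirected graph with vertex set $V_{n,k}=\mathbb{Z}_n^k$ (so $|V_{n,k}|=n^k$), whose vertices are written as strings $x_1x_2\ldots x_k$ with $x_j\in\mathbb{Z}_n=\{0,1,\ldots,n-1\}$. Two distinct vertices are adjacent if and only if they are related by one of the following rules. For $i=0$ the prefix $x_1\ldots x_i$ is empty, and ''$0\ldots0$'' denotes a string of zeros completing the word to length $k$. (R1) $x_1\ldots x_{k-1}x_k\sim x_1\ldots x_{k-1}y_k$ whenever $y_k\neq x_k$. (R2) For $0\le i\le k-2$: $x_1\ldots x_i0\ldots0\sim x_1\ldots x_ix_{i+1}\ldots x_k$ whenever $x_j\neq 0$ for all $i+1\le j\le k$. (R3) For $1\le i\le k-1$: $x_1\ldots x_{i-1}x_i0\ldots0\sim x_1\ldots x_{i-1}y_i0\ldots0$ whenever $x_i,y_i\neq0$ and $x_i\ne y_i$. In particular, $H_{n,1}$ is the complete graph $K_n$. The root of $H_{n,k}$ is the vertex $\mathbf r=00\ldots0$. The eccentricity of a vertex is its maximum distance to the other vertices; the radius (resp. diameter) is the minimum (resp. maximum) eccentricity. *)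

From mathcomp Require Import all_boot.
Set Implicit Arguments. Unset Strict Implicit. Unset Printing Implicit Defensive.

Section GraphDist.
Variable T : finType.
Variable e : rel T.

Definition walkb (m : nat) (x y : T) : bool :=
  [exists p : m.-tuple T, path e x p && (last x p == y)].

(* graph distance: the least m admitting a walk of length m
   (a shortest walk has fewer than #|T| edges; if y is unreachable the
   value is #|T|, which never occurs for the connected graphs below) *)
Definition gdist (x y : T) : nat := find (fun m => walkb m x y) (iota 0 #|T|).

Definition ecc (x : T) : nat := \max_(y : T) gdist x y.
Definition radius : nat := \big[minn/#|T|]_(x : T) ecc x.
Definition diameter : nat := \max_(x : T) ecc x.
End GraphDist.

(* ---------- the graph H_{n,k} ----------
   A vertex x_1...x_k is a k-tuple over 'I_n (coordinate x_j is at
   position j-1).  Rules are stated on the underlying seq nat. *)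

Definition R1 (k : nat) (u v : seq nat) : bool :=
  take k.-1 u == take k.-1 v.

Definition R2 (k : nat) (u v : seq nat) : bool :=
  [exists i : 'I_k.-1,
     (u == take i v ++ nseq (k - i) 0) && all (fun a => a != 0) (drop i v)].

(* (R3) u = x_1..x_{i-1} x_i 0..0, v = x_1..x_{i-1} y_i 0..0,
   x_i, y_i <> 0, x_i <> y_i, for some 1 <= i <= k-1 *)
Definition R3 (k : nat) (u v : seq nat) : bool :=
  [exists i : 'I_k,
     [&& 0 < (i : nat),
         take i.-1 u == take i.-1 v,
         nth 0 u i.-1 != 0, nth 0 v i.-1 != 0, nth 0 u i.-1 != nth 0 v i.-1,
         drop i u == nseq (k - i) 0 & drop i v == nseq (k - i) 0]].

Definition Hadj (n k : nat) : rel (k.-tuple 'I_n) :=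
  fun x y =>
    let u := map val x in let v := map val y in
    (x != y) && [|| R1 k u v, R2 k u v, R2 k v u | R3 k u v].
Arguments Hadj n k : clear implicits.

(* For a word x, let B(x) be the set of positions j at which the zero/nonzero status of
   x_j differs from that of x_{j-1} (with x_0 read as zero).  An edge of H_{n,k} changes
   the zero/nonzero status of a word only on a final segment of positions, so it moves at
   most one element into or out of B; hence |B(x) Δ B(y)| <= d(x, y).  Every x has a
   partner whose boundary set is the complement of B(x), so all eccentricities are >= k.
   Between 0101... and 1010... the first letter must become nonzero, and only an (R2)
   edge from 00...0 to a zero-free word does that; each end is at boundary distance k-1
   from it, so the distance is >= 2k-1.

   Conversely, from p 0...0 one reaches p w in |w| steps: a maximal zero-free block u of
   w followed by a 0 is written in two (R2) steps through p u 1...1, while a leading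
   zero of w is simply kept.  So the root reaches every vertex in k steps, and two
   vertices x, y are joined in 2k-1 steps through x_1 0...0 and y_1 0...0, which are
   equal, adjacent by (R3), or joined through the root. *)

From mathcomp Require Import all_boot zify.
Set Implicit Arguments. Unset Strict Implicit. Unset Printing Implicit Defensive.

Section GraphDistance.
Variables (T : finType) (e : rel T).

Lemma walkbP m x y :
  reflect (exists p : seq T, [/\ size p = m, path e x p & last x p = y])
          (walkb e m x y).
Proof.
apply: (iffP existsP) => [[p /andP[ep /eqP lp]] | [p [sp ep lp]]].
  by exists p; rewrite size_tuple.
have sp' : size p == m by rewrite sp.
by exists (Tuple sp'); rewrite /= ep lp eqxx.
Qed.

Lemma gdist_le_walk m x y : walkb e m x y -> gdist e x y <= m.
Proof.
move=> wm; have [lt_m|le_m] := ltnP m #|T|.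
  rewrite leqNgt; apply/negP => /(before_find 0).
  by rewrite nth_iota // add0n wm.
by apply: leq_trans le_m; rewrite -[X in _ <= X](size_iota 0) find_size.
Qed.

Lemma gdist_ge_walks b x y :
  b <= #|T| -> (forall m, walkb e m x y -> b <= m) -> b <= gdist e x y.
Proof.
move=> le_b walk_ge; rewrite /gdist.
have [has_w|] := boolP (has (fun m => walkb e m x y) (iota 0 #|T|)).
  have := nth_find 0 has_w; rewrite nth_iota ?add0n; first exact: walk_ge.
  by rewrite -{2}(size_iota 0 #|T|) -has_find.
by move/hasNfind->; rewrite size_iota.
Qed.

Lemma gdist_le_ecc x y : gdist e x y <= ecc e x.
Proof. exact: leq_bigmax. Qed.

Lemma ecc_le_diameter x : ecc e x <= diameter e.
Proof. exact: leq_bigmax. Qed.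

Lemma diameter_le m : (forall x y, gdist e x y <= m) -> diameter e <= m.
Proof. by move=> le_m; apply/bigmax_leqP => x _; apply/bigmax_leqP => y _. Qed.

Lemma radius_le_ecc x : radius e <= ecc e x.
Proof.
rewrite /radius; elim: (index_enum T) (mem_index_enum x) => // y s IH.
rewrite inE big_cons => /predU1P[<- | /IH]; first exact: geq_minl.
exact: leq_trans (geq_minr _ _).
Qed.

Lemma radius_ge m : m <= #|T| -> (forall x, m <= ecc e x) -> m <= radius e.
Proof.
move=> le_m ecc_ge; apply: (big_ind (leq m)) => // a b ma mb.
by rewrite leq_min ma.
Qed.

End GraphDistance.

Lemma split_crossing (U : Type) (P : pred U) x p :
  P x -> ~~ P (last x p) ->
  exists p1 v p2, [/\ p = p1 ++ v :: p2, P (last x p1) & ~~ P v].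
Proof.
elim: p x => [|a p IH] x /=; first by move->.
move=> Px; have [Pa|nPa] := boolP (P a); last by exists [::], a, p.
by case/(IH a Pa) => p1 [v [p2 [-> P1 nPv]]]; exists (a :: p1), v, p2.
Qed.

Lemma pred_double_ltn_exp m k : 1 < m -> (2 * k).-1 < m ^ k.
Proof.
move=> m_gt1; case: k => [|k]; first by rewrite expn0.
apply: (@leq_trans (2 ^ k.+1)); last by rewrite leq_exp2r.
elim: k => [|k IH] //; rewrite expnS; move: IH; have := expn_gt0 2 k.+1; lia.
Qed.

Section WordGraph.
Variable k : nat.
Implicit Types (u v : seq nat).

Definition word_adj u v := (u != v) && [|| R1 k u v, R2 k u v, R2 k v u | R3 k u v].

Lemma word_adjC : symmetric word_adj.
Proof.
move=> u v; rewrite /word_adj eq_sym; congr (_ && _).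
have -> : R1 k u v = R1 k v u by rewrite /R1 eq_sym.
have -> : R3 k u v = R3 k v u.
  by apply/existsP/existsP => -[i /and5P[i0 tuv u0 v0 /and3P[uv du dv]]];
    exists i; rewrite i0 eq_sym tuv u0 v0 eq_sym uv du dv.
by case: (R1 k v u) (R2 k u v) (R2 k v u) (R3 k v u) => [] [] [] [].
Qed.

Lemma word_adj_fill p t : size p + size t = k -> 0 < size t -> 0 \notin t ->
  word_adj (p ++ nseq (size t) 0) (p ++ t).
Proof.
move=> sk t_gt0 t_nz; apply/andP; split.
  apply: contraNneq t_nz => /(congr1 (drop (size p))); rewrite !drop_size_cat // => <-.
  by rewrite mem_nseq t_gt0.
have [t_gt1|t_le1] := ltnP 1 (size t); apply/or4P.
  apply: Or42; apply/existsP; have lt_pk : size p < k.-1 by lia.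
  exists (Ordinal lt_pk) => /=; rewrite take_size_cat // drop_size_cat //.
  have -> : k - size p = size t by lia.
  by rewrite eqxx; move: t_nz; rewrite -has_pred1 -all_predC; apply.
by apply: Or41; rewrite /R1 (_ : k.-1 = size p) ?take_size_cat //; lia.
Qed.

Lemma word_adj_lead a b : 0 < k -> a != 0 -> b != 0 -> a != b ->
  word_adj (a :: nseq k.-1 0) (b :: nseq k.-1 0).
Proof.
move=> k_gt0 a0 b0 ab; apply/andP; split; first by rewrite eqseq_cons negb_and ab.
case: k k_gt0 => [|[|k']] // _; apply/or4P; apply: Or44; apply/existsP.
by exists (Ordinal (isT : 1 < k'.+2)); rewrite /= a0 b0 ab eqxx.
Qed.

Definition nonzero_at u j := nth 0 u j != 0.

Definition boundary u j :=
  nonzero_at u j != (if j is j'.+1 then nonzero_at u j' else false).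

Definition boundary_dist u v := \sum_(j < k) (boundary u j != boundary v j).

Lemma boundary_dist_le u v : boundary_dist u v <= k.
Proof.
rewrite -[X in _ <= X](card_ord k) -sum1_card; apply: leq_sum => j _; exact: leq_b1.
Qed.

Lemma boundary_dist_triangle u v w :
  boundary_dist u w <= boundary_dist u v + boundary_dist v w.
Proof.
rewrite /boundary_dist -big_split /=; apply: leq_sum => j _.
by case: (boundary u j); case: (boundary v j); case: (boundary w j).
Qed.

Lemma boundary_dist_full u v :
  (forall j, j < k -> boundary u j != boundary v j) -> boundary_dist u v = k.
Proof.
move=> uv; rewrite /boundary_dist (eq_bigr (fun _ => 1)) ?sum1_card ?card_ord //.
by move=> [j jk] _; rewrite uv.
Qed.

Lemma boundary_dist_ge_pred u v :
  (forall j, 0 < j < k -> boundary u j != boundary v j) -> k.-1 <= boundary_dist u v.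
Proof.
rewrite /boundary_dist; case: k => [|k'] // uv; rewrite big_ord_recl /=.
apply: leq_trans (leq_addl _ _).
rewrite -[X in X <= _](card_ord k') -sum1_card; apply: leq_sum => -[j jk] _ /=.
by rewrite uv.
Qed.

Definition suffix_change u v :=
  exists a, forall j, j < k -> (nonzero_at u j != nonzero_at v j) = (a <= j).

Lemma suffix_changeC u v : suffix_change u v -> suffix_change v u.
Proof. by move=> [a uv]; exists a => j jk; rewrite eq_sym uv. Qed.

Lemma suffix_change_boundary_dist u v : suffix_change u v -> boundary_dist u v <= 1.
Proof.
move=> [a uv].
have xorA (b1 b2 c1 c2 : bool) : ((b1 != c1) != (b2 != c2)) = ((b1 != b2) != (c1 != c2)).
  by case: b1 b2 c1 c2 => [] [] [] [].
have at_a (j : 'I_k) : (boundary u j != boundary v j) = (val j == a).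
  case: j => -[|j] jk /=; rewrite /boundary xorA uv //; first by case: a {uv}.
  by rewrite uv; [case: (ltngtP a j.+1); lia | exact: ltnW].
rewrite /boundary_dist (eq_bigr _ (fun j _ => congr1 nat_of_bool (at_a j))).
have [lt_ak|le_ka] := ltnP a k; last first.
  by rewrite big1 // => j _; rewrite ltn_eqF // (leq_trans (ltn_ord j) le_ka).
rewrite (bigD1 (Ordinal lt_ak)) //= eqxx big1 // => j.
by rewrite -val_eqE /= => /negPf->.
Qed.

Lemma eq_nth_take m u v j : take m u = take m v -> j < m -> nth 0 u j = nth 0 v j.
Proof. by move=> uv jm; rewrite -(nth_take 0 jm) uv nth_take. Qed.

Lemma R1_suffix_change u v : R1 k u v -> suffix_change u v.
Proof.
move=> /eqP uv; exists (if nonzero_at u k.-1 != nonzero_at v k.-1 then k.-1 else k).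
move=> j jk; have [lt_j|ge_j] := ltnP j k.-1.
  by rewrite /nonzero_at (eq_nth_take uv lt_j) eqxx; case: ifP; lia.
have -> : j = k.-1 by lia.
by case: ifP; lia.
Qed.

Lemma R2_suffix_change u v : size v = k -> R2 k u v -> suffix_change u v.
Proof.
move=> sv /existsP[[i ik] /andP[/eqP /= def_u v_nz]]; exists i => j jk.
rewrite def_u /nonzero_at nth_cat size_takel; last by rewrite sv; lia.
have [lt_ji|le_ij] := ltnP j i; first by rewrite nth_take // eqxx.
rewrite nth_nseq (_ : j - i < k - i) /=; last by lia.
suff vj_in : nth 0 v j \in drop i v by rewrite (allP v_nz _ vj_in).
by rewrite -(subnKC le_ij) -nth_drop mem_nth // size_drop sv; lia.
Qed.

Lemma R3_suffix_change u v : size u = k -> size v = k -> R3 k u v -> suffix_change u v.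
Proof.
move=> su sv /existsP[[i ik] /and5P[/= i_gt0 /eqP uv ui vi /and3P[_ /eqP du /eqP dv]]].
exists k => j jk; rewrite leqNgt jk /nonzero_at.
have [lt_j|gt_j|->] := ltngtP j i.-1; last by rewrite ui vi.
  by rewrite (eq_nth_take uv lt_j) eqxx.
have tail0 w : drop i w = nseq (k - i) 0 -> nth 0 w j = 0.
  by move=> dw; rewrite -(subnKC (_ : i <= j)) -?nth_drop ?dw ?nth_nseq ?if_same //; lia.
by rewrite (tail0 _ du) (tail0 _ dv).
Qed.

Lemma word_adj_boundary_dist u v :
  size u = k -> size v = k -> word_adj u v -> boundary_dist u v <= 1.
Proof.
move=> su sv /andP[_ /or4P[r|r|r|r]]; apply: suffix_change_boundary_dist.
- exact: R1_suffix_change.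
- exact: R2_suffix_change.
- exact/suffix_changeC/R2_suffix_change.
- exact: R3_suffix_change.
Qed.

Lemma word_adj_first_change u v : 1 < k -> size u = k -> size v = k -> word_adj u v ->
  ~~ nonzero_at u 0 -> nonzero_at v 0 -> forall j, j < k -> ~~ nonzero_at u j && nonzero_at v j.
Proof.
move=> k_gt1 su sv /andP[_ /or4P[r|r|r|r]] u0 v0; rewrite /nonzero_at in u0 v0.
- by move: r u0 v0 => /eqP/eq_nth_take-> //; [move/negPf-> | lia].
- case/existsP: r => -[[|i] ik] /andP[/eqP /= def_u v_nz].
    move=> j jk; rewrite /nonzero_at def_u take0 /= nth_nseq if_same eqxx /=.
    by apply: (allP v_nz); rewrite drop0 mem_nth // sv.
  move: u0 v0; rewrite def_u nth_cat size_takel ?sv //=; last by lia.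
  by rewrite nth_take // => /negPf->.
- case/existsP: r => -[[|i] ik] /andP[/eqP /= def_v _].
    by move: v0; rewrite def_v take0 /= nth_nseq if_same.
  move: u0 v0; rewrite def_v nth_cat size_takel ?su //=; last by lia.
  by rewrite nth_take // => /negPf->.
- case/existsP: r => -[[|[|i]] ik] // /and5P[_ /= tuv ui _ _]; first by rewrite ui in u0.
  by move: v0; rewrite -(eq_nth_take (eqP tuv)) // (negPf u0).
Qed.

End WordGraph.

Section Reach.
Variables n k : nat.
Hypothesis n_gt1 : 1 < n.
Implicit Types (u v w p : seq nat).

Definition is_word u := (size u == k) && all (fun a => a < n) u.

Definition reach m u v :=
  exists s, [/\ size s <= m, path (word_adj k) u s, last u s = v & all is_word s].

Lemma reach_refl u : reach 0 u u.
Proof. by exists [::]. Qed.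

Lemma reach_edge u v : word_adj k u v -> is_word v -> reach 1 u v.
Proof. by move=> uv wv; exists [:: v]; rewrite /= uv wv. Qed.

Lemma reach_le m m' u v : reach m u v -> m <= m' -> reach m' u v.
Proof. by move=> [s [ss us lv ws]] le_m; exists s; split=> //; apply: leq_trans le_m. Qed.

Lemma reach_trans m m' u v w : reach m u v -> reach m' v w -> reach (m + m') u w.
Proof.
move=> [s [ss us ls ws]] [s' [ss' us' ls' ws']]; exists (s ++ s'); split.
- by rewrite size_cat leq_add.
- by rewrite cat_path us ls us'.
- by rewrite last_cat ls.
- by rewrite all_cat ws ws'.
Qed.

Lemma reach_sym m u v : is_word u -> reach m u v -> reach m v u.
Proof.
move=> wu [s [ss us <- ws]]; exists (rev (belast u s)); split.
- by rewrite size_rev size_belast.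
- by rewrite rev_path (eq_path (fun x y => word_adjC k y x)).
- by case: s {ss us ws} => //= x s; rewrite rev_cons last_rcons.
- rewrite all_rev; apply/allP => x /mem_belast; rewrite inE.
  by case/predU1P => [->|/(allP ws)].
Qed.

Lemma is_word_catr p w w' : size w' = size w -> all (fun a => a < n) w' ->
  is_word (p ++ w) -> is_word (p ++ w').
Proof.
rewrite /is_word !size_cat !all_cat => sw' lw' /andP[sk /andP[lp _]].
by rewrite sw' sk lp lw'.
Qed.

Lemma reach_block p u m : 0 \notin u -> is_word (p ++ u ++ nseq m.+1 0) ->
  reach (size u).+1 (p ++ nseq (size u + m.+1) 0) (p ++ u ++ nseq m.+1 0).
Proof.
case: u => [|a u] a_u w_end; first exact: reach_le (reach_refl _) _.
set t := a :: u ++ nseq m.+1 1.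
have st : size t = size (a :: u) + m.+1 by rewrite /t -cat_cons size_cat size_nseq.
have sk : size p + size t = k.
  by case/andP: w_end; rewrite st !size_cat !size_nseq /= => /eqP <- _; lia.
have w_mid : is_word (p ++ t).
  apply: (is_word_catr _ _ w_end); first by rewrite st size_cat size_nseq.
  move: w_end => /andP[_]; rewrite /t -cat_cons !all_cat !all_nseq n_gt1 orbT.
  by case/and3P=> _ ->.
have nz_t : 0 \notin t by rewrite /t -cat_cons mem_cat negb_or a_u mem_nseq.
have e1 := word_adj_fill sk (ltn0Sn _) nz_t; rewrite st in e1.
have e2 : word_adj k (p ++ t) (p ++ a :: u ++ nseq m.+1 0).
  rewrite word_adjC; have := @word_adj_fill k (p ++ a :: u) (nseq m.+1 1).
  rewrite size_nseq -!catA mem_nseq; apply=> //.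
  by move: sk; rewrite st !size_cat /=; lia.
exact: reach_le (reach_trans (reach_edge e1 w_mid) (reach_edge e2 w_end)) _.
Qed.

Lemma reach_fill p w : is_word (p ++ w) -> reach (size w) (p ++ nseq (size w) 0) (p ++ w).
Proof.
have [m] := ubnP (size w); elim: m p w => // m IH p w /ltnSE le_wm w_pw.
have [w_nz|] := boolP (0 \notin w).
  case: w w_nz le_wm w_pw => [|a w] w_nz _ w_pw; first by rewrite cats0; exact: reach_refl.
  apply: reach_le (reach_edge (word_adj_fill _ _ w_nz) w_pw) _ => //.
  by case/andP: w_pw; rewrite size_cat => /eqP.
rewrite negbK -has_pred1 => has0.
case: (split_find has0) le_wm w_pw => {has0} _ u w' /eqP-> u_nz le_wm w_pw.
rewrite has_pred1 in u_nz; move: le_wm; rewrite size_cat size_rcons => le_wm.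
have le_w'm : size w' < m by apply: leq_trans le_wm; rewrite addSn ltnS leq_addl.
have w_pw' : is_word ((p ++ rcons u 0) ++ w') by rewrite -catA.
have w_mid : is_word ((p ++ rcons u 0) ++ nseq (size w') 0).
  by apply: (is_word_catr _ _ w_pw'); rewrite ?size_nseq // all_nseq (ltnW n_gt1) orbT.
have ends := IH _ _ le_w'm w_pw'; rewrite -!catA !cat_rcons in w_mid ends *.
rewrite addSnnS; apply: reach_le (reach_trans (reach_block u_nz w_mid) ends) _.
by rewrite addnS.
Qed.

Lemma reach_from_zero w : is_word w -> reach k (nseq k 0) w.
Proof. by move=> ww; have := @reach_fill [::] w ww; case/andP: ww => /eqP->. Qed.

Lemma reach_from_lead a w : is_word (a :: w) -> reach k.-1 (a :: nseq k.-1 0) (a :: w).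
Proof. by move=> ww; have := @reach_fill [:: a] w ww; case/andP: ww => /eqP <-. Qed.

Lemma is_word_lead a w : is_word (a :: w) -> is_word (a :: nseq k.-1 0).
Proof.
rewrite /is_word => /andP[/eqP <- /andP[a_n _]] /=.
by rewrite size_nseq eqxx a_n all_nseq (ltnW n_gt1) orbT.
Qed.

Lemma reach_words u v : 0 < k -> is_word u -> is_word v -> reach (2 * k).-1 u v.
Proof.
move=> k_gt0; case: u => [|a u] wu; first by case/andP: wu => /eqP k0; rewrite -k0 in k_gt0.
case: v => [|b v] wv; first by case/andP: wv => /eqP k0; rewrite -k0 in k_gt0.
have to_a := reach_sym (is_word_lead wu) (reach_from_lead wu).
have from_b := reach_from_lead wv.
have zero_lead : 0 :: nseq k.-1 0 = nseq k 0 by rewrite -(prednK k_gt0).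
have [eq_ab|ab] := eqVneq a b.
  rewrite -eq_ab in from_b *; apply: reach_le (reach_trans to_a from_b) _; lia.
have [a0|a_nz] := eqVneq a 0.
  rewrite a0 in to_a *; rewrite zero_lead in to_a.
  by apply: reach_le (reach_trans to_a (reach_from_zero wv)) _; lia.
have [b0|b_nz] := eqVneq b 0.
  have w0 : is_word (nseq k 0) by have := is_word_lead wv; rewrite b0 zero_lead.
  rewrite b0 in from_b *; rewrite zero_lead in from_b.
  by apply: reach_le (reach_trans (reach_sym w0 (reach_from_zero wu)) from_b) _; lia.
have jump := reach_edge (word_adj_lead k_gt0 a_nz b_nz ab) (is_word_lead wv).
by apply: reach_le (reach_trans (reach_trans to_a jump) from_b) _; lia.
Qed.

End Reach.

Section Vertices.
Variables n' k : nat.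
Local Notation n := n'.+1.
Local Notation vertex := (k.-tuple 'I_n).
Hypothesis n_gt1 : 1 < n.

Definition word_of (x : vertex) : seq nat := map val x.

Definition vertex_of (s : seq nat) : vertex := [tuple inord (nth 0 s i) | i < k].

Lemma size_word_of x : size (word_of x) = k.
Proof. by rewrite size_map size_tuple. Qed.

Lemma is_word_of x : is_word n k (word_of x).
Proof. rewrite /is_word size_word_of eqxx; apply/allP => _ /mapP[a _ ->]; exact: ltn_ord. Qed.

Lemma word_of_inj : injective word_of.
Proof. by move=> x y /(inj_map val_inj) /val_inj. Qed.

Lemma vertex_ofK s : is_word n k s -> word_of (vertex_of s) = s.
Proof.
case/andP=> /eqP sk /allP s_n; apply: (@eq_from_nth _ 0); rewrite size_word_of // => i ik.
rewrite /word_of (nth_map ord0) ?size_tuple //.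
have -> : nth ord0 (vertex_of s) i = tnth (vertex_of s) (Ordinal ik) by rewrite (tnth_nth ord0).
by rewrite tnth_mktuple /= inordK // s_n // mem_nth // sk.
Qed.

Lemma word_ofK : cancel word_of vertex_of.
Proof. by move=> x; apply: word_of_inj; rewrite vertex_ofK ?is_word_of. Qed.

Lemma Hadj_word x y : Hadj n k x y = word_adj k (word_of x) (word_of y).
Proof. by rewrite /Hadj /word_adj (inj_eq word_of_inj). Qed.

Lemma path_vertex_of x s :
  all (is_word n k) s -> path (word_adj k) (word_of x) s -> path (Hadj n k) x (map vertex_of s).
Proof.
elim: s x => //= a s IH x /andP[wa ws] /andP[xa a_s].
by rewrite Hadj_word vertex_ofK // xa IH ?vertex_ofK.
Qed.

Lemma gdist_le_reach m x y : reach n k m (word_of x) (word_of y) -> gdist (Hadj n k) x y <= m.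
Proof.
case=> s [sm xs ls ws]; apply: leq_trans sm; apply/gdist_le_walk/walkbP.
exists (map vertex_of s); split; rewrite ?size_map ?path_vertex_of //.
by rewrite -[x]word_ofK last_map ls word_ofK.
Qed.

Lemma boundary_dist_walk x p :
  path (Hadj n k) x p -> boundary_dist k (word_of x) (word_of (last x p)) <= size p.
Proof.
elim: p x => [|y p IH] x /=; first by rewrite /boundary_dist big1 // => j _; rewrite eqxx.
case/andP=> xy yp; apply: leq_trans (boundary_dist_triangle _ _ (word_of y) _) _.
by rewrite -[(size p).+1]add1n leq_add ?IH // word_adj_boundary_dist ?size_word_of // -Hadj_word.
Qed.

Lemma card_vertex : #|{: vertex}| = n ^ k.
Proof. by rewrite card_tuple card_ord. Qed.

Lemma boundary_dist_le_gdist x y :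
  boundary_dist k (word_of x) (word_of y) <= gdist (Hadj n k) x y.
Proof.
apply: gdist_ge_walks => [|m /walkbP[p [<- xp <-]]]; last exact: boundary_dist_walk.
by rewrite card_vertex (leq_trans (boundary_dist_le _ _ _)) // ltnW // ltn_expl.
Qed.

Definition pattern (f : nat -> bool) : vertex := vertex_of [seq (f j : nat) | j <- iota 0 k].

Lemma nonzero_pattern f j : j < k -> nonzero_at (word_of (pattern f)) j = f j.
Proof.
move=> jk; rewrite vertex_ofK; last first.
  rewrite /is_word size_map size_iota eqxx.
  by apply/allP => _ /mapP[i _ ->]; case: (f i).
by rewrite /nonzero_at (nth_map 0) ?size_iota // nth_iota //; case: (f j).
Qed.

Lemma ecc_ge x : k <= ecc (Hadj n k) x.
Proof.
pose y := pattern (fun j => nonzero_at (word_of x) j != ~~ odd j).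
have full : boundary_dist k (word_of x) (word_of y) = k.
  apply: boundary_dist_full => -[|j] jk; rewrite /boundary !nonzero_pattern ?(ltnW jk) //.
    by case: nonzero_at.
  by rewrite /=; case: (odd j); case: (nonzero_at _ j.+1); case: (nonzero_at _ j).
rewrite -[X in X <= _]full; exact: leq_trans (boundary_dist_le_gdist x y) (leq_bigmax y).
Qed.

Lemma ecc_root r : (forall j, val (tnth r j) = 0) -> ecc (Hadj n k) r = k.
Proof.
move=> r0; apply/eqP; rewrite eqn_leq ecc_ge andbT; apply/bigmax_leqP => y _.
have word_r : word_of r = nseq k 0.
  apply: (@eq_from_nth _ 0) => [|i]; rewrite size_word_of ?size_nseq // => ik.
  by rewrite nth_nseq ik (nth_map ord0) ?size_tuple // -(r0 (Ordinal ik)) (tnth_nth ord0).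
by apply: gdist_le_reach; rewrite word_r; apply: reach_from_zero; rewrite ?is_word_of.
Qed.

Lemma gdist_le_double x y : 0 < k -> gdist (Hadj n k) x y <= (2 * k).-1.
Proof. by move=> k_gt0; apply/gdist_le_reach/reach_words; rewrite ?is_word_of. Qed.

Lemma gdist_alternating : 1 < k ->
  (2 * k).-1 <= gdist (Hadj n k) (pattern odd) (pattern (fun j => ~~ odd j)).
Proof.
move=> k_gt1; set x0 := pattern odd; set y0 := pattern _.
apply: gdist_ge_walks => [|m /walkbP[p [<- x0p lp]]].
  by rewrite card_vertex ltnW // pred_double_ltn_exp.
have x0_zero : ~~ nonzero_at (word_of x0) 0 by rewrite nonzero_pattern // ltnW.
have y0_nz : nonzero_at (word_of y0) 0 by rewrite nonzero_pattern // ltnW.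
have last_nz : ~~ ~~ nonzero_at (word_of (last x0 p)) 0 by rewrite lp y0_nz.
have [p1 [v [p2 [def_p u0 v_nz]]]] :=
  @split_crossing _ (fun t => ~~ nonzero_at (word_of t) 0) x0 p x0_zero last_nz.
move: x0p lp; rewrite def_p cat_path last_cat /= => /and3P[x0p1 uv vp2] lp.
have cross := word_adj_first_change k_gt1 (size_word_of _) (size_word_of _)
  (etrans (esym (Hadj_word _ _)) uv) u0 (negbNE v_nz).
have d1 : k.-1 <= boundary_dist k (word_of x0) (word_of (last x0 p1)).
  apply: boundary_dist_ge_pred => -[//|j] /andP[_ jk].
  rewrite /boundary !nonzero_pattern ?(ltnW jk) //=.
  have /andP[/negPf-> _] := cross _ jk; have /andP[/negPf-> _] := cross _ (ltnW jk).
  by case: (odd j).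
have d2 : k.-1 <= boundary_dist k (word_of v) (word_of y0).
  apply: boundary_dist_ge_pred => -[//|j] /andP[_ jk].
  rewrite /boundary !nonzero_pattern ?(ltnW jk) //=.
  have /andP[_ ->] := cross _ jk; have /andP[_ ->] := cross _ (ltnW jk).
  by case: (odd j).
have := boundary_dist_walk x0p1; have := boundary_dist_walk vp2; rewrite lp size_cat /=; lia.
Qed.

Lemma diameter_ge : (2 * k).-1 <= diameter (Hadj n k).
Proof.
apply: leq_trans (ecc_le_diameter _ (pattern odd)).
have [k_gt1|k_le1] := ltnP 1 k; last by apply: leq_trans (ecc_ge _); lia.
exact: leq_trans (gdist_alternating k_gt1) (gdist_le_ecc _ _ _).
Qed.

End Vertices.

Theorem mainTheorem4 (n k : nat) (hn : 2 <= n) (hk : 1 <= k)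
    (r : k.-tuple 'I_n) (hr : forall j : 'I_k, val (tnth r j) = 0) :
  [/\ ecc (Hadj n k) r = k,
      radius (Hadj n k) = k &
      diameter (Hadj n k) = (2 * k).-1].
Proof.
case: n hn r hr => [|n'] // hn r hr.
have ecc_r := ecc_root hn hr.
have le_k_card : k <= #|{: k.-tuple 'I_n'.+1}| by rewrite card_vertex ltnW // ltn_expl.
split=> //; apply/eqP; rewrite eqn_leq.
  rewrite (leq_trans (radius_le_ecc _ r)) ?ecc_r //=.
  by apply: radius_ge => // x; apply: ecc_ge.
rewrite diameter_ge // andbT; apply: diameter_le => x y; exact: gdist_le_double.
Qed.
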